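(* Let $t,w,w',n,g$ be positive integers. If there exists a Steiner system $\mathrm{S}(t,w',n)$ and a generalized Steiner system $\mathrm{GS}(t,w,w',g)$, then there exists a generalized Steiner system $\mathrm{GS}(t,w,n,g)$.
   Context: A Steiner system $\mathrm{S}(t,k,n)$ is a pair $(X,\mathcal{B})$ with $|X|=n$ and $\mathcal{B}$ a family of $k$-subsets (blocks) of $X$ such that every $t$-subset of $X$ is contained in exactly one block. For a set $Y$ of size $m$ (e.g. $Y=[m]$), let $X=Y\times[g]$ with groups $G_y=\{y\}\times[g]$, $y\in Y$. An H-design $\mathrm{H}(m,g,w,t)$ on this set is a family $\mathcal{A}$ of $w$-subsets (blocks) of $X$, each meeting every group in at most one point, such that each $t$-subset of $X$ whose points lie in $t$ distinct groups is contained in exactly one block. Each block $\{(y_1,a_1),\dots,(y_w,a_w)\}$ is identified with the word of length $m$ over $\{0\}\cup[g]$ (indexed by $Y$) having entry $a_s$ at coordinate $y_s$ and $0$ elsewhere. A generalized Steiner system $\mathrm{GS}(t,w,m,g)$ is an H-design $\mathrm{H}(m,g,w,t)$ such that any two distinct blocks, viewed as words, have Hamming distance at least $2(w-t)+1$. *)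

From mathcomp Require Import all_boot all_order all_algebra.
Set Implicit Arguments. Unset Strict Implicit. Unset Printing Implicit Defensive.

Definition steiner_system (t k n : nat) (B : {set {set 'I_n}}) : Prop :=
  (forall b, b \in B -> #|b| = k) /\
  (forall T : {set 'I_n}, #|T| = t -> #|[set b in B | T \subset b]| = 1).

(* Point set X = Y x [g] with Y = 'I_m; the group of a point x is x.1. *)
Definition hpoint (m g : nat) := ('I_m * 'I_g)%type.

Definition transversal (m g : nat) (A : {set hpoint m g}) : Prop :=
  forall x y, x \in A -> y \in A -> x.1 = y.1 -> x = y.

Definition H_design (m g w t : nat) (D : {set {set hpoint m g}}) : Prop :=
  (forall b, b \in D -> #|b| = w /\ transversal b) /\
  (forall T : {set hpoint m g}, #|T| = t -> transversal T ->
     #|[set b in D | T \subset b]| = 1).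

(* The word of a block: coordinate y carries Some a if (y,a) is in the block,
   None (playing the role of the symbol 0) otherwise. *)
Definition word (m g : nat) (b : {set hpoint m g}) (y : 'I_m) : option 'I_g :=
  [pick a | (y, a) \in b].

Definition hamming (m g : nat) (b1 b2 : {set hpoint m g}) : nat :=
  #|[set y : 'I_m | word b1 y != word b2 y]|.

Definition GS (t w m g : nat) (D : {set {set hpoint m g}}) : Prop :=
  @H_design m g w t D /\
  (forall b1 b2, b1 \in D -> b2 \in D -> b1 != b2 ->
     (2 * (w%:Z - t%:Z) + 1 <= (hamming b1 b2)%:Z)%R).

From Pilot Require Import Defs.
From mathcomp Require Import all_boot all_order all_algebra.
From mathcomp Require Import zify.
Set Implicit Arguments. Unset Strict Implicit. Unset Printing Implicit Defensive.

(* Replace every block b of the Steiner system by a copy of the GS(t,w,w',g),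
   with the w' coordinates relabelled by the points of b.  A transversal
   t-set T of Y x [g] has t distinct coordinates, which lie in exactly one
   block b of the Steiner system, and inside the copy over b the set T lies
   in exactly one block of the GS.  Two blocks in the same copy keep their
   Hamming distance; two blocks in copies over distinct b1, b2 have supports
   meeting in at most |b1 ∩ b2| < t coordinates, so their words differ in
   more than 2(w - t) coordinates. *)

Lemma card_uniqueP (T : finType) (P : pred T) :
  reflect (exists x, forall y, P y = (y == x)) (#|[set x | P x]| == 1).
Proof.
apply: (iffP cards1P) => [[x defP] | [x Px]]; exists x.
  by move=> y; rewrite -in_set1 -defP inE.
by apply/setP => y; rewrite inE in_set1 Px.
Qed.

Lemma steiner_cardI_lt (t k n : nat) (B : {set {set 'I_n}}) b1 b2 :
  @steiner_system t k n B -> b1 \in B -> b2 \in B -> b1 != b2 ->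
  #|b1 :&: b2| < t.
Proof.
case=> _ coverB Bb1 Bb2; apply: contraNT; rewrite -leqNgt.
case/card_geqP => s [uniq_s size_s sub_s].
have card_s : #|[set x in s]| = t by rewrite cardsE (card_uniqP uniq_s).
have /eqP/card_uniqueP[b0 defb0] := coverB _ card_s.
have in_b0 b : b \in B -> b1 :&: b2 \subset b -> b == b0.
  move=> Bb sub12; rewrite -defb0 Bb (subset_trans _ sub12) //.
  by apply/subsetP => x; rewrite inE => /sub_s.
by rewrite (eqP (in_b0 b1 Bb1 (subsetIl _ _))) eq_sym in_b0 // subsetIr.
Qed.

Section Words.
Variables m g : nat.
Implicit Types c : {set hpoint m g}.

Definition supp c : {set 'I_m} := [set x.1 | x in c].

Lemma card_supp c : Defs.transversal c -> #|supp c| = #|c|.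
Proof. by move=> tr_c; rewrite card_in_imset // => x y; apply: tr_c. Qed.

Lemma word_neqNone c y : (word c y != None) = (y \in supp c).
Proof.
rewrite /word; case: pickP => [a cya | c_y]; apply/esym.
  by apply/imsetP; exists (y, a).
by apply/imsetP => -[[y' a] cy'a /= eq_y]; move: (c_y a); rewrite eq_y cy'a.
Qed.

Lemma suppD_leq_hamming c1 c2 :
  #|supp c1 :\: supp c2| + #|supp c2 :\: supp c1| <= hamming c1 c2.
Proof.
rewrite -cardsUI !setDE [supp c2 :&: _]setIC setIACA setICr set0I cards0 addn0.
apply/subset_leq_card/subsetP => y; rewrite !inE -!word_neqNone.
by case: (word c1 y) (word c2 y) => [?|] [?|].
Qed.

Lemma hamming_lower_bound t w c1 c2 :
  Defs.transversal c1 -> Defs.transversal c2 -> #|c1| = w -> #|c2| = w ->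
  #|supp c1 :&: supp c2| < t ->
  (2 * (w%:Z - t%:Z) + 1 <= (hamming c1 c2)%:Z)%R.
Proof.
move=> tr1 tr2 card1 card2 small12; have := suppD_leq_hamming c1 c2.
rewrite !cardsD (card_supp tr1) (card_supp tr2) card1 card2 [supp c2 :&: _]setIC.
by lia.
Qed.

End Words.

Section Embedding.
Variables (n w' g : nat) (x0 : 'I_n) (b : {set 'I_n}).
Hypothesis card_b : #|b| = w'.

(* [x0] is only the default of [nth], never reached because [#|b| = w']. *)
Definition relabel (i : 'I_w') : 'I_n := nth x0 (enum b) i.

Definition embed (p : hpoint w' g) : hpoint n g := (relabel p.1, p.2).

Lemma relabel_inj : injective relabel.
Proof.
move=> i j /eqP; rewrite nth_uniq ?enum_uniq -?cardE ?card_b //.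
by move/eqP/val_inj.
Qed.

Lemma relabel_mem i : relabel i \in b.
Proof. by rewrite -mem_enum mem_nth // -cardE card_b. Qed.

Lemma relabel_onto y : y \in b -> exists i, relabel i = y.
Proof.
move=> b_y; have lt_idx : index y (enum b) < w'.
  by rewrite -card_b cardE index_mem mem_enum.
by exists (Ordinal lt_idx); rewrite /relabel nth_index ?mem_enum.
Qed.

Lemma embed_inj : injective embed.
Proof. by move=> [i a] [j a'] [/relabel_inj -> ->]. Qed.

Lemma supp_embed (d : {set hpoint w' g}) : supp (embed @: d) = relabel @: supp d.
Proof. by rewrite /supp -!imset_comp. Qed.

Lemma supp_embed_sub (d : {set hpoint w' g}) : supp (embed @: d) \subset b.
Proof.
by rewrite supp_embed; apply/subsetP => _ /imsetP[i _ ->]; apply: relabel_mem.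
Qed.

Lemma word_embed (d : {set hpoint w' g}) i : word (embed @: d) (relabel i) = word d i.
Proof.
apply: eq_pick => a; rewrite /= -[(relabel i, a)]/(embed (i, a)).
by rewrite mem_imset //; apply: embed_inj.
Qed.

Lemma word_embed_out (d : {set hpoint w' g}) y : y \notin b -> word (embed @: d) y = None.
Proof.
apply: contraNeq; rewrite word_neqNone; exact: subsetP (supp_embed_sub d) y.
Qed.

Lemma hamming_embed (d1 d2 : {set hpoint w' g}) :
  hamming (embed @: d1) (embed @: d2) = hamming d1 d2.
Proof.
rewrite /hamming -(card_imset _ relabel_inj); apply: eq_card => y.
rewrite inE; have [/relabel_onto[i <-] | b'y] := boolP (y \in b).
  by rewrite mem_imset ?inE ?word_embed //; apply: relabel_inj.
rewrite !word_embed_out // eqxx; apply/esym/imsetP => -[i _ eq_y].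
by rewrite eq_y relabel_mem in b'y.
Qed.

Lemma embed_transversal (d : {set hpoint w' g}) :
  Defs.transversal d -> Defs.transversal (embed @: d).
Proof.
move=> tr_d _ _ /imsetP[x dx ->] /imsetP[y dy ->] /relabel_inj eq_xy.
by rewrite (tr_d x y).
Qed.

Lemma preim_embed_transversal (T : {set hpoint n g}) :
  Defs.transversal T -> Defs.transversal (embed @^-1: T).
Proof.
move=> tr_T x y; rewrite !inE => Tx Ty eq_xy.
by apply: embed_inj; apply: tr_T; rewrite //= eq_xy.
Qed.

Lemma sub_embed (T : {set hpoint n g}) (d : {set hpoint w' g}) :
  (T \subset embed @: d) = (supp T \subset b) && (embed @^-1: T \subset d).
Proof.
apply/idP/andP => [sub_Td | [sub_Tb sub_preim]].
  split; first exact: subset_trans (imsetS _ sub_Td) (supp_embed_sub d).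
  apply/subsetP => x; rewrite inE => /(subsetP sub_Td).
  by rewrite mem_imset //; apply: embed_inj.
apply/subsetP => -[y a] Tya; have /relabel_onto[i eq_y] : y \in b.
  by apply: (subsetP sub_Tb); apply/imsetP; exists (y, a).
apply/imsetP; exists (i, a); last by rewrite /embed /= eq_y.
by apply: (subsetP sub_preim); rewrite inE /embed /= eq_y.
Qed.

Lemma card_preim_embed (T : {set hpoint n g}) :
  supp T \subset b -> #|embed @^-1: T| = #|T|.
Proof.
move=> sub_Tb; have embed_preimK : embed @: (embed @^-1: T) = T.
  apply/eqP; rewrite eqEsubset sub_embed sub_Tb (subxx (embed @^-1: T)) !andbT.
  by apply/subsetP => _ /imsetP[x + ->]; rewrite inE.
by rewrite -{2}embed_preimK card_imset //; apply: embed_inj.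
Qed.

End Embedding.

Section Blowup.
Variables (t w w' n g : nat) (x0 : 'I_n).
Variables (B : {set {set 'I_n}}) (D : {set {set hpoint w' g}}).
Hypotheses (SB : @steiner_system t w' n B) (GD : @GS t w w' g D).

Definition blowup : {set {set hpoint n g}} :=
  [set embed x0 b @: d | b : {set 'I_n} in B, d : {set hpoint w' g} in D].

Lemma mem_blowup b d : b \in B -> d \in D -> embed x0 b @: d \in blowup.
Proof. exact: imset2_f. Qed.

Lemma blowup_block (c : {set hpoint n g}) :
  c \in blowup -> #|c| = w /\ Defs.transversal c.
Proof.
case/imset2P => b d Bb Dd ->; have [cardB _] := SB; have [[blockD _] _] := GD.
have [card_d tr_d] := blockD d Dd; have card_b := cardB b Bb.
by rewrite card_imset ?card_d; [split; last exact: embed_transversal | exact: embed_inj].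
Qed.

Lemma blowup_cover (T : {set hpoint n g}) : #|T| = t -> Defs.transversal T ->
  #|[set c in blowup | T \subset c]| = 1.
Proof.
move=> card_T tr_T; have [cardB coverB] := SB; have [[_ coverD] _] := GD.
have /eqP/card_uniqueP[b0 defb0] := coverB (supp T) (etrans (card_supp tr_T) card_T).
have /andP[Bb0 sub_Tb0] : (b0 \in B) && (supp T \subset b0) by rewrite defb0.
have card_b0 := cardB b0 Bb0.
have card_preim : #|embed x0 b0 @^-1: T : {set hpoint w' g}| = t.
  by rewrite card_preim_embed.
have tr_preim : Defs.transversal (embed x0 b0 @^-1: T : {set hpoint w' g}).
  exact: preim_embed_transversal.
have /eqP/card_uniqueP[d0 defd0] := coverD _ card_preim tr_preim.
have /andP[Dd0 sub_Td0] : (d0 \in D) && (embed x0 b0 @^-1: T \subset d0) by rewrite defd0.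
apply/eqP/card_uniqueP; exists (embed x0 b0 @: d0) => c.
apply/andP/eqP => [[/imset2P[b d Bb Dd ->]] | ->]; last first.
  by rewrite sub_embed // sub_Tb0 sub_Td0; split; first exact: mem_blowup.
rewrite sub_embed ?cardB // => /andP[sub_Tb sub_preim].
have /eqP eq_b : b == b0 by rewrite -defb0 Bb sub_Tb.
move: sub_preim; rewrite eq_b => sub_preim.
by have /eqP -> : d == d0 by rewrite -defd0 Dd sub_preim.
Qed.

Lemma blowup_dist (c1 c2 : {set hpoint n g}) :
  c1 \in blowup -> c2 \in blowup -> c1 != c2 ->
  (2 * (w%:Z - t%:Z) + 1 <= (hamming c1 c2)%:Z)%R.
Proof.
move=> /imset2P[b1 d1 Bb1 Dd1 ->] /imset2P[b2 d2 Bb2 Dd2 ->].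
have [cardB _] := SB; have [_ distD] := GD.
have [card1 tr1] := blowup_block (mem_blowup Bb1 Dd1).
have [card2 tr2] := blowup_block (mem_blowup Bb2 Dd2).
have [<- | neq_b] := eqVneq b1 b2 => [neq_c | _].
  rewrite hamming_embed ?cardB //; apply: distD => //.
  by apply: contraNneq neq_c => ->.
apply: hamming_lower_bound tr1 tr2 card1 card2 _.
apply: leq_ltn_trans (steiner_cardI_lt SB Bb1 Bb2 neq_b).
by apply/subset_leq_card/setISS; apply: supp_embed_sub; apply: cardB.
Qed.

Lemma GS_blowup : @GS t w n g blowup.
Proof.
by split; [split|]; [apply: blowup_block | apply: blowup_cover | apply: blowup_dist].
Qed.

End Blowup.

Theorem lemma3p1 (t w w' n g : nat) :
  0 < t -> 0 < w -> 0 < w' -> 0 < n -> 0 < g ->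
  (exists B : {set {set 'I_n}}, @steiner_system t w' n B) ->
  (exists D : {set {set hpoint w' g}}, @GS t w w' g D) ->
  exists D : {set {set hpoint n g}}, @GS t w n g D.
Proof.
move=> _ _ _ n_gt0 _ [B SB] [D GD].
by exists (blowup (Ordinal n_gt0) B D); apply: GS_blowup.
Qed.
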